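(* For any $w \in \{b,\beta\}^*$ such that $\varphi_w$ is primitive, the set $C(w) = \{\varphi_v : v = \mathrm{cyc}^k(w),\ k\in\mathbb{N}\}$ is closed under derivation.
   Context: Morphisms on $\{0,1\}^*$: $\varphi_b: 0 \mapsto 0, 1\mapsto 01$; $\varphi_\beta: 0\mapsto 10, 1 \mapsto 1$ (also $\varphi_a: 0\mapsto 0,1\mapsto 10$, $\varphi_\alpha: 0\mapsto 01, 1\mapsto 1$); for $w=w_0\cdots w_{m-1}$, $\varphi_w = \varphi_{w_0}\circ\cdots\circ\varphi_{w_{m-1}}$. For a word $u = u_0u_1\cdots u_{n-1}$, $\mathrm{cyc}(u) = u_1\cdots u_{n-1}u_0$. A morphism is primitive if some power maps every letter to a word containing every letter; a substitution is a morphism $\psi$ with a letter $c$ such that $\psi(c)=cx$, $x$ nonempty, $|\psi^n(c)|\to\infty$. Derived word: for a uniformly recurrent word $\mathbf{u}$ and a factor $v$, a return word of $v$ is a factor $r$ such that $rv$ is a factor in which $v$ occurs exactly twice (as prefix and suffix); if $r_0,\dots,r_k$ are all return words, write $\mathbf{u}=p\,r_{s_0}r_{s_1}\cdots$ with $|p|$ the first occurrence of $v$; $\mathbf{d}_{\mathbf{u}}(v)=s_0s_1\cdots$, up to permutation of letters. A finite set $M$ of primitive substitutions is closed under derivation if for every $\varphi\in M$, every fixed point $\mathbf{u}$ of $\varphi$ and every factor $v$ of $\mathbf{u}$, $\mathbf{d}_{\mathbf{u}}(v)$ is fixed by some $\psi\in M$. *)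

From Stdlib Require List.
From mathcomp Require Import all_boot.
Set Implicit Arguments. Unset Strict Implicit. Unset Printing Implicit Defensive.

(* Alphabet {0,1} is encoded as bool: 0 = false, 1 = true. *)

Definition morphism := bool -> seq bool.

Definition app (phi : morphism) (s : seq bool) : seq bool := flatten (map phi s).

Inductive gen := Gb | Gbeta.

Definition phi_gen (g : gen) : morphism :=
  match g with
  | Gb => fun c => if c then [:: false; true] else [:: false]
  | Gbeta => fun c => if c then [:: true] else [:: true; false]
  end.

Definition phi_word (w : seq gen) : morphism :=
  foldr (fun g acc => fun c => app (phi_gen g) (acc c)) (fun c => [:: c]) w.

Definition cyc {T : Type} (u : seq T) : seq T := rot 1 u.

Definition mpow (psi : morphism) (n : nat) (c : bool) : seq bool :=
  iter n (app psi) [:: c].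

Definition primitive (psi : morphism) : Prop :=
  exists n, 0 < n /\ forall a c : bool, c \in mpow psi n a.

Definition substitution (psi : morphism) : Prop :=
  exists c x, x <> [::] /\ psi c = c :: x /\
    (forall N, exists n, N <= size (mpow psi n c)).

Definition pre (u : nat -> bool) (n : nat) : seq bool := mkseq u n.

Definition fixed_point (phi : morphism) (u : nat -> bool) : Prop :=
  forall n, app phi (pre u n) = pre u (size (app phi (pre u n))).

Definition occurs_at (u : nat -> bool) (v : seq bool) (i : nat) : Prop :=
  mkseq (fun j => u (i + j)) (size v) = v.

Definition factor (v : seq bool) (u : nat -> bool) : Prop :=
  exists i, occurs_at u v i.


Definition count_occ (s v : seq bool) : nat :=
  count (fun i => take (size v) (drop i s) == v) (iota 0 (size s - size v).+1).

Definition return_word (u : nat -> bool) (v r : seq bool) : Prop :=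
  factor (r ++ v) u /\ count_occ (r ++ v) v = 2 /\ take (size v) (r ++ v) = v.

(* d is the derived sequence of u w.r.t. v, coded by the return words
   themselves: u = p d_0 d_1 d_2 ... with |p| the first occurrence of v *)
Definition derived_seq (u : nat -> bool) (v : seq bool) (d : nat -> seq bool) : Prop :=
  exists p : seq bool,
    occurs_at u v (size p) /\ (forall i, i < size p -> ~ occurs_at u v i) /\
    (forall n, let s := p ++ flatten (mkseq d n) in s = pre u (size s)) /\
    (forall j, return_word u v (d j)).

(* finite set M (given as a list) of morphisms closed under derivation;
   the derived word is considered up to a bijective renaming of its letters
   (the return words) onto {0,1} *)
Definition closed_under_derivation (M : list morphism) : Prop :=
  (forall psi, List.In psi M -> primitive psi /\ substitution psi) /\
  (forall phi u v d, List.In phi M -> fixed_point phi u -> factor v u ->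
     derived_seq u v d ->
     exists psi, List.In psi M /\
       exists sigma : seq bool -> bool,
         (forall j k, sigma (d j) = sigma (d k) -> d j = d k) /\
         fixed_point psi (fun j => sigma (d j))).

(* C(w) = { phi_v : v = cyc^k(w), k in N }; since cyc^(|w|) w = w it suffices
   to take k < |w| (and k = 0 when w is empty) *)
Definition Cset (w : seq gen) : list morphism :=
  map (fun k => phi_word (iter k cyc w)) (iota 0 (size w).+1).

From mathcomp Require Import all_boot zify.
Set Implicit Arguments. Unset Strict Implicit. Unset Printing Implicit Defensive.

(* Primitivity of phi_w just says that w contains both generators, which is
   invariant under cyclic shifts.  A fixed point u of phi_(g w) is phi_g(u')
   where u' = phi_w(u) is a fixed point of phi_(w g), the morphism of a cyclic
   shift.  With a the letter of g, phi_g cuts u into blocks a and a c, so the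
   occurrences of a word a s in u start blocks and correspond to the
   occurrences in u' of a shorter word, and the return words in u are the
   phi_g-images of those in u', hence follow the same pattern.  A word starting
   with the other letter is first extended to a v, since each of its
   occurrences is preceded by a.  Every step shortens the word, or keeps its
   length and first letter while moving that letter one place closer to the
   front of the shifted w; so we reach the empty word, whose return words are
   the letters of a fixed point of some phi_(rot k w). *)

Lemma app_cons (f : morphism) x s : app f (x :: s) = f x ++ app f s.
Proof. by []. Qed.

Lemma app1 (f : morphism) x : app f [:: x] = f x.
Proof. exact: cats0. Qed.

Lemma app_cat (f : morphism) s t : app f (s ++ t) = app f s ++ app f t.
Proof. by rewrite /app map_cat flatten_cat. Qed.

Lemma app_comp (f h : morphism) s : app (fun c => app f (h c)) s = app f (app h s).
Proof. by elim: s => [|x s IHs] //; rewrite !app_cons IHs app_cat. Qed.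

Lemma eq_app (f h : morphism) : f =1 h -> app f =1 app h.
Proof. by move=> efh s; rewrite /app (eq_map efh). Qed.

Lemma mem_app (f : morphism) s x : (x \in app f s) = has (fun y => x \in f y) s.
Proof. by elim: s => [|y s IHs] //; rewrite app_cons mem_cat IHs. Qed.

Lemma leq_size_app (f : morphism) s :
  (forall c, 0 < size (f c)) -> size s <= size (app f s).
Proof.
by move=> f_gt0; elim: s => [|x s IHs] //; rewrite app_cons size_cat /=; have := f_gt0 x; lia.
Qed.

Definition slice (u : nat -> bool) i j := map u (iota i (j - i)).

Lemma size_pre u n : size (pre u n) = n.
Proof. exact: size_mkseq. Qed.

Lemma pre_slice u n : pre u n = slice u 0 n.
Proof. by rewrite /slice subn0. Qed.

Lemma occurs_slice u v i : occurs_at u v i <-> slice u i (i + size v) = v.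
Proof. by rewrite /occurs_at /slice addKn -[i in iota i](addn0 i) iotaDl -map_comp. Qed.

Lemma slice1 u i : slice u i i.+1 = [:: u i].
Proof. by rewrite /slice subSnn. Qed.

Lemma slice_split u i j k : i <= j <= k -> slice u i k = slice u i j ++ slice u j k.
Proof.
move=> /andP [ij jk]; rewrite /slice.
have -> : k - i = (j - i) + (k - j) by lia.
by rewrite iotaD map_cat subnKC.
Qed.

Lemma slice_cons u i j : i < j -> slice u i j = u i :: slice u i.+1 j.
Proof. by move=> ij; rewrite (@slice_split u i i.+1 j) ?leqnSn ?slice1. Qed.

Lemma slice_rcons u i j : i <= j -> slice u i j.+1 = rcons (slice u i j) (u j).
Proof. by move=> ij; rewrite (@slice_split u i j j.+1) ?ij ?leqnSn ?slice1 ?cats1. Qed.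

Lemma drop_slice u i j q : drop q (slice u i j) = slice u (i + q) j.
Proof. by rewrite /slice -map_drop drop_iota subnDA. Qed.

Lemma take_slice u i j m : i + m <= j -> take m (slice u i j) = slice u i (i + m).
Proof.
by move=> le_j; rewrite /slice -map_take take_iota addKn; congr (map u (iota _ _)); lia.
Qed.

Lemma pre_split u i j : i <= j -> pre u j = pre u i ++ slice u i j.
Proof. by move=> ij; rewrite !pre_slice (@slice_split u 0 i j) ?ij. Qed.

Lemma take_pre u m n : m <= n -> take m (pre u n) = pre u m.
Proof. by move=> mn; rewrite (pre_split u mn) take_size_cat ?size_pre. Qed.

Lemma prefix_pre u n s t : pre u n = s ++ t -> s = pre u (size s).
Proof.
move=> e; have le_s : size s <= n by rewrite -(size_pre u n) e size_cat leq_addr.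
by rewrite -(take_pre u le_s) e take_size_cat.
Qed.

Lemma occurs_cons u x s i : occurs_at u (x :: s) i <-> u i = x /\ occurs_at u s i.+1.
Proof.
rewrite !occurs_slice /= addnS addSn slice_cons ?ltnS ?leq_addr //.
by split=> [[-> ->] | [-> ->]].
Qed.

Section Increasing.
Variable c : nat -> nat.
Hypothesis c_incr : forall j, c j < c j.+1.

Lemma incr_leq : {mono c : i j / i <= j}.
Proof. exact/leq_mono/(homo_ltn ltn_trans c_incr). Qed.

Lemma incr_ltn : {mono c : i j / i < j}.
Proof. exact/leqW_mono/incr_leq. Qed.

Lemma incr_inj : injective c.
Proof. exact/incn_inj/incr_leq. Qed.

Lemma incr_cover i : c 0 <= i -> exists j, c j <= i < c j.+1.
Proof.
elim: i => [|i IHi] le0i; first by exists 0; have := c_incr 0; lia.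
case: (leqP (c 0) i) => [/IHi [j /andP [lo hi]] | lt_i0].
  case: (ltnP i.+1 (c j.+1)) => hi'; first by exists j; lia.
  by exists j.+1; have := c_incr j.+1; lia.
by exists 0; have := c_incr 0; lia.
Qed.

Lemma incr_surj_id : (forall i, exists j, c j = i) -> c =1 id.
Proof.
move=> c_surj; elim=> [|j IHj] /=.
  by have [m cm] := c_surj 0; apply/eqP; rewrite -leqn0 -[X in _ <= X]cm incr_leq.
have [m cm] := c_surj j.+1.
have lt_jm : j < m by rewrite -incr_ltn IHj cm.
apply/eqP; rewrite eqn_leq -[X in _ <= X]cm incr_leq lt_jm.
by have := c_incr j; rewrite IHj.
Qed.

End Increasing.

Definition same_pattern (T1 T2 : Type) (f : nat -> T1) (g : nat -> T2) :=
  forall j k, f j = f k <-> g j = g k.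

Lemma same_pattern_sym T1 T2 (f : nat -> T1) (g : nat -> T2) :
  same_pattern f g -> same_pattern g f.
Proof. by move=> fg j k; rewrite fg. Qed.

Lemma same_pattern_trans T1 T2 T3 (f : nat -> T1) (g : nat -> T2) (h : nat -> T3) :
  same_pattern f g -> same_pattern g h -> same_pattern f h.
Proof. by move=> fg gh j k; rewrite fg gh. Qed.

Lemma same_pattern_inj T1 T2 (f : nat -> T2) (g : nat -> T1) (h : T1 -> T2) :
  injective h -> f =1 h \o g -> same_pattern f g.
Proof. by move=> inj_h efg j k; rewrite !efg /=; split=> [/inj_h | ->]. Qed.

Definition letter (g : gen) : bool := if g is Gb then false else true.

Lemma phi_genE g c :
  phi_gen g c = if c == letter g then [:: letter g] else [:: letter g; c].
Proof. by case: g; case: c. Qed.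

Lemma phi_word_rcons w g c : phi_word (rcons w g) c = app (phi_word w) (phi_gen g c).
Proof.
elim: w c => [|h w IHw] c /=; first by rewrite /app /= cats0 flatten_map1 map_id.
by rewrite IHw app_comp.
Qed.

Lemma mem_app_phi_gen g s x : s != [::] ->
  (x \in app (phi_gen g) s) = (x == letter g) || (x \in s).
Proof.
elim: s => [|y s IHs] // _; rewrite app_cons mem_cat inE phi_genE.
have -> : (x \in if y == letter g then [:: letter g] else [:: letter g; y]) =
          (x == letter g) || (x == y) by case: eqP => [->|_]; rewrite !inE ?orbb.
case: s IHs => [|z s] IHs; first by rewrite in_nil !orbF.
by rewrite IHs //; case: (x == letter g).
Qed.

Lemma mem_phi_word w c x : (x \in phi_word w c) = (x == c) || (x \in map letter w).
Proof.
elim: w x => [|g w IHw] x /=; first by rewrite inE orbF.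
have ne_w : phi_word w c != [::] by have := IHw c; rewrite eqxx; case: (phi_word w c).
by rewrite mem_app_phi_gen // IHw inE; case: (x == c); case: (x == letter g).
Qed.

Lemma size_phi_word_gt0 w c : 0 < size (phi_word w c).
Proof. by have := mem_phi_word w c c; rewrite eqxx; case: (phi_word w c). Qed.

Lemma app_phi_word_id w x s : x \notin map letter w ->
  (x \in app (phi_word w) s) = (x \in s).
Proof.
move=> /negbTE no_x; rewrite mem_app; elim: s => [|y s IHs] //=.
by rewrite mem_phi_word no_x orbF inE IHs.
Qed.

Lemma primitive_phi_wordP w : primitive (phi_word w) <-> forall x, x \in map letter w.
Proof.
split=> [[n [_ prim]] x | all_x].
  apply: contraT => no_x; have := prim (~~ x) x.
  rewrite /mpow; elim: n {prim} => [|n IHn] /=; first by rewrite inE; case: x {no_x}.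
  by rewrite app_phi_word_id.
by exists 1; split=> // a c; rewrite /mpow /= mem_app /= orbF mem_phi_word all_x orbT.
Qed.

Lemma phi_word_cons_head g w c : exists t, phi_word (g :: w) c = letter g :: t.
Proof.
have := size_phi_word_gt0 w c; rewrite /=; case: (phi_word w c) => [//|y s] _.
by rewrite app_cons phi_genE; case: ifP; eexists.
Qed.

Lemma substitution_phi_word w : primitive (phi_word w) -> substitution (phi_word w).
Proof.
move=> /primitive_phi_wordP all_x; case: w all_x => [|g w] all_x; first by have := all_x true.
set psi := phi_word (g :: w); set a := letter g.
have [t psi_a] : exists t, psi a = a :: t := phi_word_cons_head g w a.
have t_ne0 : t != [::].
  have := mem_phi_word (g :: w) a (~~ a); rewrite all_x orbT -/psi psi_a inE.
  by case: (a); case: (t).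
exists a, t; split; [exact/eqP | split=> // N; exists N].
suff [s [-> le_Ns]] : exists s, mpow psi N a = a :: s /\ N <= size s by apply: leq_trans le_Ns _.
elim: N => [|N [s [psiN le_Ns]]]; first by exists [::].
exists (t ++ app psi s); split; first by rewrite /mpow iterS -/(mpow psi N a) psiN app_cons psi_a.
have := leq_size_app s (size_phi_word_gt0 (g :: w)).
move: t_ne0; rewrite -/psi size_cat -size_eq0 -lt0n => t_gt0 le_s.
exact: leq_add t_gt0 (leq_trans le_Ns le_s).
Qed.

Lemma In_mapP (T : eqType) U (f : T -> U) s y :
  List.In y (map f s) <-> exists2 x, x \in s & y = f x.
Proof.
elim: s => [|x s IHs] /=; first by split=> // [[]].
rewrite IHs; split=> [[<- | [z z_s ->]] | [z]]; first by exists x; rewrite ?inE ?eqxx.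
  by exists z; rewrite // inE z_s orbT.
by rewrite inE => /orP [/eqP -> | z_s] ->; [left | right; exists z].
Qed.

Lemma iter_cyc k (s : seq gen) : k <= size s -> iter k cyc s = rot k s.
Proof.
elim: k => [|k IHk] lt_ks; first by rewrite rot0.
by rewrite iterS IHk ?(ltnW lt_ks) // /cyc -rotS.
Qed.

Lemma CsetP w psi : List.In psi (Cset w) <-> exists k, psi = phi_word (rot k w).
Proof.
rewrite In_mapP; split=> [[k k_w ->] | [k ->]].
  by exists k; rewrite iter_cyc //; move: k_w; rewrite mem_iota.
case: (leqP k (size w)) => [le_kw | lt_wk].
  by exists k; rewrite ?mem_iota ?iter_cyc //; lia.
by exists 0; rewrite ?mem_iota // rot_oversize // ltnW.
Qed.

Lemma Cset_rot n w psi : List.In psi (Cset (rot n w)) -> List.In psi (Cset w).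
Proof. by move=> /CsetP [k ->]; apply/CsetP; exists (rot_add w n k); rewrite rot_rot_add. Qed.

(* y = R(x); fixed_point R u unfolds to is_image R u u. *)
Definition is_image (R : morphism) (x y : nat -> bool) :=
  forall n, app R (pre x n) = pre y (size (app R (pre x n))).

Lemma eq_is_image R S x y : R =1 S -> is_image R x y -> is_image S x y.
Proof. by move=> eRS xy n; rewrite -!(eq_app eRS). Qed.

Lemma eq_fixed_point R x y : x =1 y -> fixed_point R x -> fixed_point R y.
Proof. by move=> exy fix_x n; rewrite /pre -!(eq_mkseq exy); apply: fix_x. Qed.

Lemma is_image_comp R S x y z :
  is_image R x y -> is_image S y z -> is_image (fun c => app S (R c)) x z.
Proof. by move=> xy yz n; rewrite app_comp xy; apply: yz. Qed.

Lemma is_image_factor R S x y z : (forall c, 0 < size (R c)) ->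
  is_image R x y -> is_image (fun c => app S (R c)) x z -> is_image S y z.
Proof.
move=> R_gt0 xy xz n; set N := size (app R (pre x n)).
have le_nN : n <= N by rewrite -{1}(size_pre x n) leq_size_app.
have e := xz n; rewrite app_comp xy -/N -(cat_take_drop n (pre y N)) take_pre // app_cat in e.
exact: prefix_pre (esym e).
Qed.

Lemma is_image_exists R x : (forall c, 0 < size (R c)) -> exists y, is_image R x y.
Proof.
move=> R_gt0; pose y n := nth false (app R (pre x n.+1)) n.
have pre_y n m : n <= m -> pre y n = take n (app R (pre x m)).
  move=> le_nm; have := leq_size_app (pre x m) R_gt0; rewrite size_pre => le_m.
  apply: (@eq_from_nth _ false); first by rewrite size_pre size_takel //; lia.
  move=> i; rewrite size_pre => lt_in; have le_im : i < m by lia.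
  have := leq_size_app (pre x i.+1) R_gt0; rewrite size_pre => le_i.
  by rewrite nth_mkseq // nth_take // /y (pre_split x le_im) app_cat nth_cat ifT.
exists y => n.
have le_nN : n <= size (app R (pre x n)) by rewrite -{1}(size_pre x n) leq_size_app.
by rewrite (pre_y _ _ (leqnn _)) (pre_split x le_nN) app_cat take_size_cat.
Qed.

Lemma fixed_point_desubst g w u : fixed_point (phi_word (g :: w)) u ->
  exists2 u', is_image (phi_gen g) u' u & fixed_point (phi_word (rcons w g)) u'.
Proof.
move=> fix_u; have [u' img_u'] := is_image_exists u (size_phi_word_gt0 w).
have img_u : is_image (phi_gen g) u' u.
  exact: is_image_factor (size_phi_word_gt0 w) img_u' fix_u.
exists u' => //; apply: eq_is_image (is_image_comp img_u img_u') => c.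
by rewrite phi_word_rcons.
Qed.

(* [decode a s] parses s, which should start with a, into the blocks [a] and
   [a; c] of phi_g (a = letter g) and returns the letters they code; the last
   a is dropped since its block may continue (see decode_app). *)
Fixpoint decode (a : bool) (s : seq bool) : seq bool :=
  if s is _ :: s' then
    if s' is y :: s'' then (if y == a then a :: decode a s' else y :: decode a s'')
    else [::]
  else [::].

Lemma decode_cons2 a x y s :
  decode a (x :: y :: s) = if y == a then a :: decode a (y :: s) else y :: decode a s.
Proof. by []. Qed.

Lemma size_decode a s : size (decode a s) <= (size s).-1.
Proof.
have [n] := ubnP (size s); elim: n s => // n IHn [|x [|y s]] //= lt_sn.
case: eqP => _ /=.
  by have := IHn (y :: s); rewrite /=; lia.
by have := IHn s; lia.
Qed.

Lemma app_phi_gen_rcons g t : exists r, app (phi_gen g) t ++ [:: letter g] = letter g :: r.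
Proof. by case: t => [|y t]; [exists [::] | rewrite app_cons phi_genE; case: ifP; eexists]. Qed.

Lemma decode_app g t : decode (letter g) (app (phi_gen g) t ++ [:: letter g]) = t.
Proof.
elim: t => [|x t IHt] //; have [r er] := app_phi_gen_rcons g t.
rewrite er in IHt; rewrite app_cons -catA er phi_genE.
case: eqVneq => [-> | nxa]; first by rewrite cat1s decode_cons2 eqxx IHt.
by rewrite !cat_cons cat0s decode_cons2 (negbTE nxa) IHt.
Qed.

Lemma app_phi_gen_inj g : injective (app (phi_gen g)).
Proof. by move=> s t e; rewrite -(decode_app g s) e decode_app. Qed.

Definition enum_occ (u : nat -> bool) (v : seq bool) (c : nat -> nat) :=
  (forall j, c j < c j.+1) /\ forall i, occurs_at u v i <-> exists j, c j = i.

Definition seg (u : nat -> bool) (c : nat -> nat) j := slice u (c j) (c j.+1).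

Section Desubstitution.
Variables (g : gen) (u' u : nat -> bool).
Hypothesis image_u : is_image (phi_gen g) u' u.
Local Notation a := (letter g).

Definition block_start i := size (app (phi_gen g) (pre u' i)).

Lemma block_startE i :
  block_start i.+1 = if u' i == a then (block_start i).+1 else (block_start i).+2.
Proof.
rewrite /block_start /pre mkseqS -cats1 app_cat size_cat app1 phi_genE.
by case: ifP => _; rewrite ?addn1 ?addn2.
Qed.

Lemma block_start_incr i : block_start i < block_start i.+1.
Proof. by rewrite block_startE; case: ifP. Qed.

Lemma slice_block_start i j : i <= j ->
  slice u (block_start i) (block_start j) = app (phi_gen g) (slice u' i j).
Proof.
move=> ij; have le_ij : block_start i <= block_start j.
  by rewrite incr_leq //; apply: block_start_incr.
have e : pre u (block_start j) = app (phi_gen g) (pre u' j) := esym (image_u j).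
rewrite (pre_split u le_ij) (pre_split u' ij) app_cat (image_u i) in e.
by move/eqP: e; rewrite eqseq_cat ?size_pre // => /andP [_ /eqP].
Qed.

Lemma slice_block i : slice u (block_start i) (block_start i.+1) = phi_gen g (u' i).
Proof. by rewrite slice_block_start // slice1 app1. Qed.

Lemma u_block_start i : u (block_start i) = a.
Proof.
have := slice_block i; rewrite slice_cons ?block_start_incr // phi_genE.
by case: ifP => _ [].
Qed.

Lemma u_block_startS i : u (block_start i).+1 = u' i.
Proof.
case: (eqVneq (u' i) a) => [ua | nua].
  by have := block_startE i; rewrite ua eqxx => <-; rewrite u_block_start.
have := slice_block i; rewrite block_startE (negbTE nua) phi_genE (negbTE nua).
by rewrite 2?slice_cons // /slice subnn => -[_ ->].
Qed.

Lemma block_start_cover n :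
  exists i, n = block_start i \/ n = (block_start i).+1 /\ u' i != a.
Proof.
have [i /andP [lo hi]] := incr_cover block_start_incr (leq0n n).
exists i; move: hi; rewrite block_startE; case: eqVneq => [_ | nua] hi; first by left; lia.
have [-> | ->] : n = block_start i \/ n = (block_start i).+1 by lia.
  by left.
by right.
Qed.

Lemma block_startP n : u n = a -> exists i, n = block_start i.
Proof.
have [i [-> | [-> nua]]] := block_start_cover n; first by exists i.
by rewrite u_block_startS => ua; move: nua; rewrite ua eqxx.
Qed.

Lemma pred_block_start n : u n != a -> exists i, n = (block_start i).+1.
Proof.
have [i [-> | [-> _]]] := block_start_cover n; last by exists i.
by rewrite u_block_start eqxx.
Qed.

(* The occurrence at block_start k excludes words with two consecutive letters
   other than a: they never occur in u, but decode still translates them. *)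
Lemma occurs_decode s k i : occurs_at u (a :: s) (block_start k) ->
  occurs_at u (a :: s) (block_start i) <-> occurs_at u' (decode a (a :: s)) i.
Proof.
have bsS j : u' j = a -> block_start j.+1 = (block_start j).+1.
  by move=> uj; rewrite block_startE uj eqxx.
have bsS2 j : u' j != a -> block_start j.+1 = (block_start j).+2.
  by move=> /negbTE uj; rewrite block_startE uj.
have [n] := ubnP (size s); elim: n s k i => // n IHn [|x s] k i lt_sn.
  by move=> _; rewrite occurs_cons u_block_start; split.
move=> occ_k; have := occ_k.
rewrite decode_cons2 !occurs_cons !u_block_start !u_block_startS => -[_ [uk occ_k']].
move: uk; case: eqVneq => [-> | nxa] uk.
  have occ_k1 : occurs_at u (a :: s) (block_start k.+1).
    by rewrite occurs_cons u_block_start bsS.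
  rewrite occurs_cons -(IHn s k.+1 i.+1) // occurs_cons u_block_start.
  by split=> [[_ [ui occ]] | [ui [_ occ]]]; rewrite ?(bsS i ui) in occ *; do !split.
have bsi : u' i = x -> block_start i.+1 = (block_start i).+2.
  by move=> ui; apply: bsS2; rewrite ui.
rewrite occurs_cons; case: s lt_sn occ_k occ_k' => [|z s] lt_sn occ_k occ_k'.
  by split=> [[_ [-> _]] | [-> _]]; do !split.
have uk' : u' k != a by rewrite uk.
rewrite -(bsS2 k uk') occurs_cons u_block_start in occ_k'; case: occ_k' => <- _.
have occ_k1 : occurs_at u (a :: s) (block_start k.+1).
  by move: occ_k; rewrite !occurs_cons !u_block_start (bsS2 k uk') => -[_ [_ [_ ?]]].
have lt_s : size s < n by move: lt_sn => /=; lia.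
rewrite -(IHn s k.+1 i.+1) //.
by split=> [[_ [ui occ]] | [ui occ]]; rewrite ?(bsi ui) in occ *; do !split.
Qed.

Lemma enum_occ_decode s c : enum_occ u (a :: s) c ->
  exists c', enum_occ u' (decode a (a :: s)) c' /\ same_pattern (seg u c) (seg u' c').
Proof.
move=> [c_incr occ_c].
have occ_cj j : occurs_at u (a :: s) (c j) by apply/occ_c; exists j.
have block_c j : exists i, block_start i == c j.
  by have /occurs_cons [/block_startP [i ->] _] := occ_cj j; exists i.
pose c' j := ex_minn (block_c j).
have c'E j : block_start (c' j) = c j by rewrite /c'; case: ex_minnP => i /eqP.
have c'_incr j : c' j < c' j.+1 by rewrite -(incr_ltn block_start_incr) !c'E.
have occ_0 : occurs_at u (a :: s) (block_start (c' 0)) by rewrite c'E.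
exists c'; split; first split=> // i.
  rewrite -(occurs_decode _ occ_0) occ_c.
  split=> [[j cj] | [j <-]]; last by exists j.
  by exists j; apply: (incr_inj block_start_incr); rewrite c'E.
apply: same_pattern_inj (@app_phi_gen_inj g) _ => j.
by rewrite /seg -(c'E j) -(c'E j.+1) slice_block_start ?(ltnW (c'_incr j)).
Qed.

Lemma enum_occ_cons x s c : x != a -> enum_occ u (x :: s) c ->
  enum_occ u (a :: x :: s) (fun j => (c j).-1) /\
  same_pattern (seg u c) (seg u (fun j => (c j).-1)).
Proof.
move=> nxa [c_incr occ_c].
have after_a j : 0 < c j /\ u (c j).-1 = a.
  have /occurs_cons [ucj _] : occurs_at u (x :: s) (c j) by apply/occ_c; exists j.
  have [i ->] : exists i, c j = (block_start i).+1 by apply: pred_block_start; rewrite ucj.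
  by rewrite u_block_start.
split; first split=> [j | i].
- by have := c_incr j; have := after_a j; have := after_a j.+1; lia.
- rewrite occurs_cons occ_c; split=> [[_ [j cj]] | [j <-]]; first by exists j; rewrite cj.
  by have [c_gt0 ->] := after_a j; rewrite prednK //; split=> //; exists j.
pose mid j := slice u (c j) (c j.+1).-1.
have seg_rcons : same_pattern (seg u c) mid.
  apply: same_pattern_inj (@rcons_injl _ a) _ => j /=.
  have [c_gt0 <-] := after_a j.+1; rewrite -slice_rcons ?prednK //.
  by have := c_incr j; lia.
have seg_cons : same_pattern (seg u (fun j => (c j).-1)) mid.
  have cons_inj : injective (cons a) by move=> ? ? [].
  apply: same_pattern_inj cons_inj _ => j /=.
  have [c_gt0 <-] := after_a j; rewrite /seg slice_cons ?prednK //.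
  by have := c_incr j; have := after_a j.+1; lia.
exact: same_pattern_trans seg_rcons (same_pattern_sym seg_cons).
Qed.

End Desubstitution.

Lemma count_occ_ge3 s v x y z : x < y < z -> z <= size s - size v ->
  all (fun q => take (size v) (drop q s) == v) [:: x; y; z] -> 3 <= count_occ s v.
Proof.
move=> /andP [xy yz] z_le /allP occ; rewrite /count_occ -size_filter.
apply: (@uniq_leq_size _ [:: x; y; z]) => [|q q_in].
  by rewrite /= !inE; lia.
rewrite mem_filter occ // mem_iota.
by move: q_in; rewrite !inE add0n ltnS => /or3P [] /eqP ->; apply: leq_trans z_le; lia.
Qed.

Section DerivedSequence.
Variables (u : nat -> bool) (v p : seq bool) (d : nat -> seq bool).
Hypotheses (first_p : forall i, i < size p -> ~ occurs_at u v i)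
  (prefix_d : forall n, let s := p ++ flatten (mkseq d n) in s = pre u (size s))
  (return_d : forall j, return_word u v (d j)).

Definition return_pos j := size p + size (flatten (mkseq d j)).

Lemma return_posS j : return_pos j.+1 = return_pos j + size (d j).
Proof. by rewrite /return_pos mkseqS flatten_rcons size_cat addnA. Qed.

Lemma pre_return_pos n : pre u (return_pos n) = p ++ flatten (mkseq d n).
Proof. by rewrite /return_pos -size_cat -prefix_d. Qed.

Lemma return_word_seg j : d j = seg u return_pos j.
Proof.
have e := pre_return_pos j.+1.
rewrite (pre_split u (_ : return_pos j <= _)) ?return_posS ?leq_addr // in e.
rewrite pre_return_pos mkseqS flatten_rcons catA -return_posS in e.
by move/eqP: e; rewrite eqseq_cat ?size_pre // => /andP [_ /eqP <-].
Qed.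

Lemma size_return_word_gt0 j : 0 < size (d j).
Proof.
have [_ [count2 _]] := return_d j; move: count2; case: (d j) => [|//].
by rewrite /count_occ subnn /= drop0 take_size eqxx.
Qed.

Lemma return_pos_incr j : return_pos j < return_pos j.+1.
Proof. by rewrite return_posS -addn1 leq_add2l size_return_word_gt0. Qed.

Lemma slice_return_pos t j : t <= size v ->
  slice u (return_pos j) (return_pos j + t) = take t v.
Proof.
(* v is a prefix of each d j ++ v, and u reads d j, d j.+1, ... from return_pos j. *)
elim/ltn_ind: t j => t IHt j le_tv.
have [_ [_ prefix_v]] := return_d j.
rewrite -prefix_v take_takel // take_cat.
case: ltnP => [lt_td | le_dt].
  by rewrite return_word_seg /seg take_slice // return_posS leq_add2l ltnW.
have e : return_pos j.+1 + (t - size (d j)) = return_pos j + t by rewrite return_posS; lia.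
have := size_return_word_gt0 j => d_gt0.
rewrite -(IHt _ _ j.+1) ?e; [|lia|lia].
by rewrite {1}return_word_seg -slice_split // return_posS; lia.
Qed.

Lemma occurs_return_pos j : occurs_at u v (return_pos j).
Proof. by rewrite occurs_slice slice_return_pos // take_size. Qed.

Lemma return_posP i : occurs_at u v i -> exists j, return_pos j = i.
Proof.
move=> occ_i; have le_pi : return_pos 0 <= i.
  by rewrite /return_pos addn0 leqNgt; apply/negP => /first_p.
have [j /andP [lo hi]] := incr_cover return_pos_incr le_pi.
case: (eqVneq (return_pos j) i) => [|neq]; first by exists j.
(* An occurrence inside d j would be a third occurrence of v in d j ++ v. *)
have [_ [count2 _]] := return_d j; suff : 3 <= count_occ (d j ++ v) v by rewrite count2.
have dv_slice : d j ++ v = slice u (return_pos j) (return_pos j.+1 + size v).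
  have occ_next := occurs_return_pos j.+1; rewrite occurs_slice in occ_next.
  rewrite return_word_seg (@slice_split u _ (return_pos j.+1)) ?occ_next //.
  by rewrite leq_addr andbT ltnW ?return_pos_incr.
have occ_dv q : return_pos j + q <= return_pos j.+1 -> occurs_at u v (return_pos j + q) ->
    take (size v) (drop q (d j ++ v)) == v.
  move=> le_q; rewrite occurs_slice => occ_q.
  by rewrite dv_slice drop_slice take_slice ?occ_q // leq_add2r.
apply: (@count_occ_ge3 _ _ 0 (i - return_pos j) (size (d j))).
- have lt_ji : return_pos j < i by rewrite ltn_neqAle neq lo.
  by move: hi; rewrite return_posS; lia.
- by rewrite size_cat addnK.
rewrite /= !occ_dv -?return_posS ?addn0 ?subnKC ?(ltnW hi) ?(ltnW (return_pos_incr j)) //;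
  exact: occurs_return_pos.
Qed.

End DerivedSequence.

Lemma derived_seq_enum u v d : derived_seq u v d ->
  exists2 c, enum_occ u v c & forall j, d j = seg u c j.
Proof.
move=> [p [_ [first_p [prefix_d return_d]]]].
exists (return_pos p d); last exact: return_word_seg.
split; first exact: return_pos_incr.
move=> i; split; first exact: return_posP.
by move=> [j <-]; apply: occurs_return_pos.
Qed.

Lemma same_pattern_occ_nil u c : enum_occ u [::] c -> same_pattern (seg u c) u.
Proof.
move=> [c_incr occ_c]; have c_id := incr_surj_id c_incr (fun i => proj1 (occ_c i) (erefl _)).
have single_inj : injective (fun x : bool => [:: x]) by move=> ? ? [].
by apply: same_pattern_inj single_inj _ => j; rewrite /seg !c_id slice1.
Qed.

(* Lexicographic in the length of v and the position of its first letter in w. *)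
Definition rank (v : seq bool) (w : seq gen) :=
  size v * (size w).+1 + index (head false v) (map letter w).

Lemma rank_decode g w s :
  rank (decode (letter g) (letter g :: s)) (rcons w g) < rank (letter g :: s) (g :: w).
Proof.
have := size_decode (letter g) (letter g :: s).
have := index_size (head false (decode (letter g) (letter g :: s))) (map letter (rcons w g)).
rewrite /rank size_map size_rcons /=; nia.
Qed.

Lemma rank_cons g w x s : x != letter g -> x \in map letter w ->
  rank (x :: decode (letter g) s) (rcons w g) < rank (x :: s) (g :: w).
Proof.
move=> nxg x_w; have := size_decode (letter g) s.
rewrite /rank /= size_rcons map_rcons -cats1 index_cat x_w eq_sym (negbTE nxg) /=.
have := index_size x (map letter w); nia.
Qed.

Lemma derivation_step g w u v c : (forall x, x \in map letter (g :: w)) -> v != [::] ->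
  fixed_point (phi_word (g :: w)) u -> enum_occ u v c ->
  exists u' v' c', [/\ fixed_point (phi_word (rcons w g)) u', enum_occ u' v' c',
    same_pattern (seg u c) (seg u' c') & rank v' (rcons w g) < rank v (g :: w)].
Proof.
move=> letters_w v_ne0 fix_u; have [u' img_u fix_u'] := fixed_point_desubst fix_u.
case: v v_ne0 => [//|x s] _ occ.
case: (eqVneq x (letter g)) occ => [-> | nxg] occ.
  have [c' [occ' pat]] := enum_occ_decode img_u occ.
  by exists u', (decode (letter g) (letter g :: s)), c'; split=> //; apply: rank_decode.
have [occ1 pat1] := enum_occ_cons img_u nxg occ.
have [c' [occ' pat']] := enum_occ_decode img_u occ1.
exists u', (x :: decode (letter g) s), c'; split=> //.
- by move: occ'; rewrite decode_cons2 (negbTE nxg).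
- exact: same_pattern_trans pat1 pat'.
by apply: rank_cons => //; have := letters_w x; rewrite inE (negbTE nxg).
Qed.

Lemma derived_pattern_in_Cset w u v c : (forall x, x \in map letter w) ->
  fixed_point (phi_word w) u -> enum_occ u v c ->
  exists2 psi, List.In psi (Cset w) & exists2 e, fixed_point psi e & same_pattern (seg u c) e.
Proof.
have [n] := ubnP (rank v w); elim: n w u v c => // n IHn w u v c lt_rank letters_w fix_u occ.
case: (eqVneq v [::]) => [v0 | v_ne0].
  exists (phi_word w); first by apply/CsetP; exists 0; rewrite rot0.
  by exists u => //; apply: same_pattern_occ_nil; rewrite -v0.
case: w letters_w fix_u lt_rank => [letters_w | g w letters_w fix_u lt_rank].
  by have := letters_w true.
have [u' [v' [c' [fix_u' occ' pat lt_rank']]]] := derivation_step letters_w v_ne0 fix_u occ.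
have letters_w' x : x \in map letter (rcons w g) by rewrite -rot1_cons map_rot mem_rot.
have [psi psi_in [e fix_e pat_e]] :=
  IHn _ _ _ _ (leq_trans lt_rank' lt_rank) letters_w' fix_u' occ'.
exists psi; first by apply: (@Cset_rot 1); rewrite rot1_cons.
by exists e => //; apply: same_pattern_trans pat pat_e.
Qed.

Lemma same_pattern_recode (T : eqType) (d : nat -> T) (e : nat -> bool) :
  same_pattern d e -> exists sigma : T -> bool,
    (forall j k, sigma (d j) = sigma (d k) -> d j = d k) /\ forall j, sigma (d j) = e j.
Proof.
(* e is binary, so a letter is recoded by whether it equals d 0. *)
move=> de; pose sigma x := if x == d 0 then e 0 else ~~ e 0.
have sigmaE j : sigma (d j) = e j.
  rewrite /sigma; case: eqP => [/de -> // | /de].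
  by case: (e j); case: (e 0).
by exists sigma; split=> // j k; rewrite !sigmaE => /de.
Qed.

Theorem claim25 (w : seq gen) :
  primitive (phi_word w) -> closed_under_derivation (Cset w).
Proof.
move=> /primitive_phi_wordP letters_w.
have letters_rot k x : x \in map letter (rot k w) by rewrite map_rot mem_rot.
(* The hypothesis factor v u is implied by derived_seq u v d. *)
split=> [psi /CsetP [k ->] | phi u v d /CsetP [k ->] fix_u _ /derived_seq_enum [c occ dE]].
  have prim : primitive (phi_word (rot k w)) by apply/primitive_phi_wordP.
  by split=> //; apply: substitution_phi_word.
have [psi psi_in [e fix_e pat]] := derived_pattern_in_Cset (letters_rot k) fix_u occ.
exists psi; split; first exact: Cset_rot psi_in.
have pat_d : same_pattern d e by move=> i j; rewrite !dE; apply: pat.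
have [sigma [sigma_inj sigmaE]] := same_pattern_recode pat_d.
by exists sigma; split=> //; apply: eq_fixed_point fix_e => j; rewrite sigmaE.
Qed.
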